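(* Consider any sequences evolved by Algorithm 2 and let $d_0:=\|x^0-x^*\|$. Then for all $k\ge1$, $\sum_{j=1}^k\frac{A_j}{\lambda_j^{(p+1)/(p-1)}}\le\frac{d_0^2}{\theta^{2/(p-1)}(1-\sigma^2)}$. In particular (assuming $d_0>0$), for all $k\ge1$, $\lambda_k\ge C\,d_0^{-2(p-1)/(p+1)}$, where $C:=\lambda_1^{\frac{p-1}{p+1}}\theta^{\frac{2}{p+1}}(1-\sigma^2)^{\frac{p-1}{p+1}}$.
   Context: Setting: $\mathcal H$ is a finite-dimensional real inner product space with inner product $\langle\cdot,\cdot\rangle$ and norm $\|\cdot\|$. $f,g:\mathcal H\to(-\infty,\infty]$ are proper, closed, convex functions, $h:=f+g$ has nonempty domain, and $g$ is $\mu$-strongly convex for some $\mu>0$, i.e. $g(tx+(1-t)y)\le tg(x)+(1-t)g(y)-\frac{\mu}{2}t(1-t)\|x-y\|^2$ for all $x,y\in\mathcal H$, $t\in[0,1]$. $x^*$ denotes the unique minimizer of $h$. For $\varepsilon\ge 0$, $\partial_\varepsilon f(y):=\{u\in\mathcal H: f(w)\ge f(y)+\langle u,w-y\rangle-\varepsilon\ \forall w\in\mathcal H\}$, and $\partial g:=\partial_0 g$. Algorithm 2: Choose $x^0,y^0\in\mathcal H$, $\sigma\in[0,1)$, $p\ge2$ and $\theta>0$, and set $A_0=0$. For $k=0,1,2,\dots$: choose $\lambda_{k+1}>0$, set $a_{k+1}=\frac{(1+2\mu A_k)\lambda_{k+1}+\sqrt{(1+2\mu A_k)^2\lambda_{k+1}^2+4(1+\mu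 A_k)A_k\lambda_{k+1}}}{2}$ and $\tilde x^k=\frac{a_{k+1}-\mu A_k\lambda_{k+1}}{A_k+a_{k+1}}x^k+\frac{A_k+\mu A_k\lambda_{k+1}}{A_k+a_{k+1}}y^k$; compute $(y^{k+1},v^{k+1},\varepsilon_{k+1})\in\mathcal H\times\mathcal H\times[0,\infty)$ such that $v^{k+1}\in\partial_{\varepsilon_{k+1}}f(y^{k+1})+\partial g(y^{k+1})$, $\frac{\|\lambda_{k+1}v^{k+1}+y^{k+1}-\tilde x^k\|^2}{1+\lambda_{k+1}\mu}+2\lambda_{k+1}\varepsilon_{k+1}\le\sigma^2\|y^{k+1}-\tilde x^k\|^2$, and $\lambda_{k+1}\|y^{k+1}-\tilde x^k\|^{p-1}\ge\theta$; then set $A_{k+1}=A_k+a_{k+1}$ and $x^{k+1}=\frac{1+\mu A_k}{1+\mu A_{k+1}}x^k+\frac{\mu a_{k+1}}{1+\mu A_{k+1}}y^{k+1}-\frac{a_{k+1}}{1+\mu A_{k+1}}v^{k+1}$. ''Sequences evolved by Algorithm 2'' means any sequences satisfying all these relations for every $k\ge 0$. *)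

From HB Require Import structures.
From mathcomp Require Import all_boot all_order all_algebra.
From mathcomp Require Import all_classical all_reals all_analysis.
Set Implicit Arguments. Unset Strict Implicit. Unset Printing Implicit Defensive.
Import Order.TTheory GRing.Theory Num.Theory.
Import numFieldNormedType.Exports.
Local Open Scope ring_scope.
Local Open Scope ereal_scope.

(* The finite-dimensional real inner product space H is modelled as R^n
   (row vectors 'rV[R]_n) with the standard Euclidean inner product. *)

Definition ip (R : realType) (n : nat) (u w : 'rV[R]_n) : R :=
  (\sum_(i < n) u ord0 i * w ord0 i)%R.

Definition vnorm (R : realType) (n : nat) (u : 'rV[R]_n) : R :=
  Num.sqrt (ip u u).

Definition proper_fun (R : realType) (n : nat) (f : 'rV[R]_n -> \bar R) : Prop :=
  (forall x, f x != -oo) /\ (exists x, f x < +oo).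

Definition closed_fun (R : realType) (n : nat) (f : 'rV[R]_n -> \bar R) : Prop :=
  forall a : R, @closed 'rV[R]_n [set x | f x <= a%:E]%classic.

Definition convex_fun (R : realType) (n : nat) (f : 'rV[R]_n -> \bar R) : Prop :=
  forall (x y : 'rV[R]_n) (t : R), (0 <= t <= 1)%R ->
    f (t *: x + (1 - t) *: y)%R <= t%:E * f x + (1 - t)%:E * f y.

Definition strongly_convex_fun (R : realType) (n : nat) (mu : R)
    (g : 'rV[R]_n -> \bar R) : Prop :=
  forall (x y : 'rV[R]_n) (t : R), (0 <= t <= 1)%R ->
    g (t *: x + (1 - t) *: y)%R <=
      t%:E * g x + (1 - t)%:E * g y
      - (mu / 2 * t * (1 - t) * (vnorm (x - y)) ^+ 2)%:E.

Definition eps_subdiff (R : realType) (n : nat) (eps : R)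
    (f : 'rV[R]_n -> \bar R) (y u : 'rV[R]_n) : Prop :=
  forall w, f y + (ip u (w - y) - eps)%:E <= f w.

Definition subdiff (R : realType) (n : nat) (g : 'rV[R]_n -> \bar R)
    (y u : 'rV[R]_n) : Prop := eps_subdiff 0%R g y u.

Definition in_sum_subdiff (R : realType) (n : nat) (eps : R)
    (f g : 'rV[R]_n -> \bar R) (y v : 'rV[R]_n) : Prop :=
  exists u1 u2, v = (u1 + u2)%R /\ eps_subdiff eps f y u1 /\ subdiff g y u2.

Definition is_minimizer (R : realType) (n : nat) (h : 'rV[R]_n -> \bar R)
    (xs : 'rV[R]_n) : Prop := forall x, h xs <= h x.

Definition algorithm2 (R : realType) (n : nat) (f g : 'rV[R]_n -> \bar R)
    (mu sigma p theta : R)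
    (x y v xt : nat -> 'rV[R]_n) (eps lam a A : nat -> R) : Prop :=
  A 0%N = 0%R /\
  forall k : nat,
    (0 < lam k.+1)%R /\
        a k.+1 = (((1 + 2 * mu * A k) * lam k.+1
                  + Num.sqrt ((1 + 2 * mu * A k) ^+ 2 * lam k.+1 ^+ 2
                              + 4 * (1 + mu * A k) * A k * lam k.+1)) / 2)%R /\
        xt k = (((a k.+1 - mu * A k * lam k.+1) / (A k + a k.+1)) *: x k
                + ((A k + mu * A k * lam k.+1) / (A k + a k.+1)) *: y k)%R /\
        (0 <= eps k.+1)%R /\
        in_sum_subdiff (eps k.+1) f g (y k.+1) (v k.+1) /\
        ((vnorm (lam k.+1 *: v k.+1 + y k.+1 - xt k)) ^+ 2 / (1 + lam k.+1 * mu)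
           + 2 * lam k.+1 * eps k.+1
           <= sigma ^+ 2 * (vnorm (y k.+1 - xt k)) ^+ 2)%R /\
        (theta <= lam k.+1 * powR (vnorm (y k.+1 - xt k)) (p - 1))%R /\
        A k.+1 = (A k + a k.+1)%R /\
        x k.+1 = (((1 + mu * A k) / (1 + mu * A k.+1)) *: x k
                  + ((mu * a k.+1) / (1 + mu * A k.+1)) *: y k.+1
                  - (a k.+1 / (1 + mu * A k.+1)) *: v k.+1)%R.

From HB Require Import structures.
From mathcomp Require Import all_boot all_order all_algebra.
From mathcomp Require Import all_classical all_reals all_analysis.
From mathcomp Require Import ring lra.
Import Order.TTheory GRing.Theory Num.Theory.
Local Open Scope ring_scope.
Set Implicit Arguments.
Unset Strict Implicit.

(* H is R^n with the Euclidean inner product ip, and h = f + g.  The proof is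
   a Lyapunov argument with the potential
     P_k = A_k (h(y^k) - h(xs)) + (1 + mu A_k)/2 |x^k - xs|^2
   and the residuals
     T_j = (1 - sigma^2) A_j / (2 lam_j) |y^j - xt^(j-1)|^2.
   One step gives P_(k+1) + T_(k+1) <= P_k; it combines the subgradient
   inequality of h at y^(k+1) (tested at xs and at y^k), the relative-error
   condition, and an exact algebraic identity of the update formulas that
   holds because a_(k+1) solves a quadratic equation.  Telescoping yields
   sum_j T_j <= d0^2 / 2.  The large-step condition
   lam_j |y^j - xt^(j-1)|^(p-1) >= theta bounds each weight
   A_j / lam_j^((p+1)/(p-1)) by a fixed multiple of T_j (first claim); the
   second claim solves the last term of the sum for lam_k, using
   A_k >= A_1 = lam_1. *)

Section InnerProduct.
Variables (R : realType) (n : nat).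
Implicit Types (u w z : 'rV[R]_n) (t : R).

Lemma ip_ge0 u : 0 <= ip u u.
Proof. by apply: sumr_ge0 => i _; rewrite -expr2 sqr_ge0. Qed.

Lemma vnorm_sq u : vnorm u ^+ 2 = ip u u.
Proof. by rewrite /vnorm sqr_sqrtr // ip_ge0. Qed.

Lemma vnorm_ge0 u : 0 <= vnorm u.
Proof. exact: sqrtr_ge0. Qed.

Lemma ipDl u w z : ip (u + w) z = ip u z + ip w z.
Proof. by rewrite /ip -big_split; apply: eq_bigr => i _; rewrite mxE mulrDl. Qed.

Lemma ipZr u w t : ip u (t *: w) = t * ip u w.
Proof. by rewrite /ip mulr_sumr; apply: eq_bigr => i _; rewrite mxE mulrCA. Qed.

(* The algebraic identity behind one step of Algorithm 2: for the extrapolated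
   point xt and the new iterate xn, the combination of squared distances and
   subgradient terms appearing in the potential decrease is a nonnegative
   multiple of |x - y|^2, provided a solves the step-size quadratic. *)
Lemma estimate_sequence_identity (mu A a lam : R) (x y yn v w : 'rV[R]_n) :
  0 < mu -> 0 <= A -> 0 < a -> 0 < lam ->
  a ^+ 2 = lam * ((1 + mu * A) * (A + a) + mu * A * a) ->
  let Ap := A + a in let B := 1 + mu * A in let Bp := 1 + mu * Ap in
  let xt := ((a - mu * A * lam) / Ap) *: x + ((A + mu * A * lam) / Ap) *: y in
  let xn := (B / Bp) *: x + (mu * a / Bp) *: yn - (a / Bp) *: v in
  B / 2 * ip (x - w) (x - w) - Bp / 2 * ip (xn - w) (xn - w)
  - Ap / (2 * lam) * ip (yn - xt) (yn - xt)
  + a * ip v (w - yn) + a * mu / 2 * ip (w - yn) (w - yn)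
  + A * ip v (y - yn) + A * mu / 2 * ip (y - yn) (y - yn)
  + Ap / (2 * lam * (1 + lam * mu)) * ip (lam *: v + yn - xt) (lam *: v + yn - xt)
  = mu * A * a * B * (1 + lam * mu) / (2 * Ap * Bp) * ip (x - y) (x - y).
Proof.
move=> mu0 A0 a0 l0 ha Ap B Bp xt xn.
have muA0 : 0 <= mu * A := mulr_ge0 (ltW mu0) A0.
have muAa0 : 0 <= mu * A * a := mulr_ge0 muA0 (ltW a0).
have BAp0 : 0 < (1 + mu * A) * (A + a) by rewrite mulr_gt0 //; lra.
have hD : (1 + mu * A) * (A + a) + mu * A * a != 0 by rewrite lt0r_neq0 //; lra.
have hAp : A + a != 0 by rewrite lt0r_neq0 //; lra.
have muAp0 : 0 <= mu * (A + a) by apply: mulr_ge0 (ltW mu0) _; lra.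
have hBp : 1 + mu * (A + a) != 0 by rewrite lt0r_neq0 //; lra.
have a2mu0 : 0 <= a ^+ 2 * mu := mulr_ge0 (sqr_ge0 a) (ltW mu0).
have hl : lam = a ^+ 2 / ((1 + mu * A) * (A + a) + mu * A * a) by rewrite ha mulfK.
rewrite /xt /xn /Bp /B /Ap {ha xt xn Bp B Ap}; subst lam.
rewrite /ip !mulr_sumr -!sumrN -!big_split /=.
apply: eq_bigr => i _; rewrite !mxE.
field; rewrite hBp hAp hD (lt0r_neq0 a0) andbT /=.
by rewrite lt0r_neq0 //; lra.
Qed.

End InnerProduct.

Section Subgradients.
Variables (R : realType) (n : nat).
Implicit Types (f g : 'rV[R]_n -> \bar R) (y u v w : 'rV[R]_n).

Lemma eps_subdiff_fin f (eps : R) y u :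
  proper_fun f -> eps_subdiff eps f y u -> f y \is a fin_num.
Proof.
move=> [fNoo [z fz]] hs; rewrite fin_numE fNoo /=.
apply/negP => /eqP fy; move: (hs z); rewrite fy addye //.
by rewrite leye_eq => /eqP fz'; rewrite fz' ltxx in fz.
Qed.

(* Strong
   convexity along [y, w] gives it up to a factor (1 - t) on the quadratic
   term for every t in (0, 1]; t is then chosen small relative to any
   tolerance e > 0. *)
Lemma strong_subgrad_ineq g (mu : R) y u w :
  proper_fun g -> 0 < mu -> strongly_convex_fun mu g -> subdiff g y u ->
  g w \is a fin_num ->
  fine (g y) + ip u (w - y) + mu / 2 * ip (w - y) (w - y) <= fine (g w).
Proof.
move=> pg mu0 sc hs fw.
have fy := eps_subdiff_fin pg hs.
set Gy := fine (g y); set Gw := fine (g w); set N := ip (w - y) (w - y).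
have N0 : 0 <= N by exact: ip_ge0.
have along_segment t : 0 < t <= 1 ->
    Gy + ip u (w - y) + mu / 2 * (1 - t) * N <= Gw.
  move=> /andP[t0 t1].
  have := sc w y t; rewrite (ltW t0) t1 => /(_ isT).
  have := hs (t *: w + (1 - t) *: y).
  rewrite -(fineK fy) -(fineK fw) -/Gy -/Gw => h1 h2.
  have := le_trans h1 h2.
  rewrite -!EFinM -EFinD -EFinB lee_fin vnorm_sq.
  have -> : t *: w + (1 - t) *: y - y = t *: (w - y).
    by apply/matrixP => i j; rewrite !mxE; ring.
  rewrite ipZr -/N => h.
  have : t * (Gy + ip u (w - y) + mu / 2 * (1 - t) * N) <= t * Gw by lra.
  by rewrite ler_pM2l.
apply/ler_addgt0Pr => e e0.
have hN : 0 <= mu / 2 * N by apply: mulr_ge0; lra.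
pose t := e / (e + mu / 2 * N).
have hpos : 0 < e + mu / 2 * N by lra.
have tE : t * (e + mu / 2 * N) = e by rewrite /t mulfVK // lt0r_neq0.
have t0 : 0 < t by rewrite /t divr_gt0.
have t1 : t <= 1 by rewrite /t ler_pdivrMr // mul1r; lra.
have := along_segment t; rewrite t0 t1 => /(_ isT).
have : 0 <= t * e by apply: mulr_ge0; lra.
nra.
Qed.

Lemma sum_subdiff_ineq f g (mu eps : R) y v w :
  proper_fun f -> proper_fun g -> 0 < mu -> strongly_convex_fun mu g ->
  in_sum_subdiff eps f g y v -> f w \is a fin_num -> g w \is a fin_num ->
  fine (f y) + fine (g y) + ip v (w - y) - eps + mu / 2 * ip (w - y) (w - y)
    <= fine (f w) + fine (g w).
Proof.
move=> pf pg mu0 sc [u1 [u2 [-> [hf hg]]]] fw gw.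
have hgi := strong_subgrad_ineq pg mu0 sc hg gw.
have fy := eps_subdiff_fin pf hf.
have := hf w; rewrite -(fineK fy) -(fineK fw) -EFinD lee_fin => hfi.
rewrite ipDl; lra.
Qed.

End Subgradients.

Lemma step_size_root (R : realType) (mu A lam a : R) :
  0 <= mu -> 0 <= A -> 0 < lam ->
  a = ((1 + 2 * mu * A) * lam
       + Num.sqrt ((1 + 2 * mu * A) ^+ 2 * lam ^+ 2
                   + 4 * (1 + mu * A) * A * lam)) / 2 ->
  0 < a /\ a ^+ 2 = lam * ((1 + mu * A) * (A + a) + mu * A * a).
Proof.
move=> mu0 A0 l0.
set b := 1 + 2 * mu * A; set rad := b ^+ 2 * lam ^+ 2 + _ => ha.
have muA0 : 0 <= mu * A := mulr_ge0 mu0 A0.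
have b0 : 0 < b by rewrite /b; lra.
have rad0 : 0 <= rad.
  rewrite /rad addr_ge0 ?mulr_ge0 ?sqr_ge0 ?(ltW l0) //; lra.
have sq0 := sqrtr_ge0 rad.
have bl0 : 0 < b * lam by exact: mulr_gt0.
split; first by rewrite ha; lra.
(* sqrt rad = 2a - b lam, and squaring gives the quadratic *)
have hsq : (2 * a - b * lam) ^+ 2 = rad.
  by rewrite (_ : 2 * a - b * lam = Num.sqrt rad) ?sqr_sqrtr // ha; field.
have : 4 * (a ^+ 2 - lam * ((1 + mu * A) * (A + a) + mu * A * a)) = 0.
  by rewrite -(subrr rad) -{1}hsq /rad /b; ring.
by move/eqP; rewrite mulf_eq0 => /orP[/eqP|/eqP]; [lra | move/eqP; rewrite subr_eq0 => /eqP].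
Qed.

Lemma large_step_weight (R : realType) (p theta lam s A : R) :
  1 < p -> 0 < theta -> 0 < lam -> 0 <= s -> 0 <= A ->
  theta <= lam * powR s (p - 1) ->
  A / powR lam ((p + 1) / (p - 1))
    <= A * s ^+ 2 / (lam * powR theta (2 / (p - 1))).
Proof.
move=> p1 th0 l0 s0 A0 hth.
set r := 2 / (p - 1).
have p1' : p - 1 != 0 by rewrite subr_eq0 gt_eqF.
have r0 : 0 <= r by rewrite /r divr_ge0 //; lra.
have lr : 0 < powR lam r by exact: powR_gt0.
have tr : 0 < powR theta r by exact: powR_gt0.
have lq : powR lam ((p + 1) / (p - 1)) = lam * powR lam r.
  rewrite (_ : (p + 1) / (p - 1) = 1 + r); last by rewrite /r; field.
  by rewrite powRD ?powRr1 ?(ltW l0) // (gt_eqF l0) implybT.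
(* raising theta / lam <= s^(p-1) to the power r = 2/(p-1) *)
have ht : powR theta r <= powR lam r * s ^+ 2.
  have tl : theta / lam <= powR s (p - 1) by rewrite ler_pdivrMr // mulrC.
  have := @ge0_ler_powR R r r0 (theta / lam) (powR s (p - 1)).
  rewrite !nnegrE powR_ge0 divr_ge0 ?(ltW th0) ?(ltW l0) // => /(_ isT isT tl).
  rewrite -powRrM (_ : (p - 1) * r = 2%:R); last by rewrite /r; field.
  rewrite powR_mulrn // => h.
  rewrite -[theta](mulfVK (lt0r_neq0 l0)) [_ / _ * _]mulrC.
  rewrite powRM ?(ltW l0) ?divr_ge0 ?(ltW th0) ?(ltW l0) //.
  by rewrite ler_wpM2l // ltW.
have -> : A / powR lam ((p + 1) / (p - 1))
    = A / (lam * powR theta r) * (powR theta r / powR lam r).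
  by rewrite lq; field; rewrite !lt0r_neq0.
rewrite [X in _ <= X]mulrAC; apply: ler_wpM2l; first by rewrite divr_ge0 // ltW // mulr_gt0.
by rewrite ler_pdivrMr // mulrC.
Qed.

(* Solving  l1 / l^((p+1)/(p-1)) <= d^2 / (theta^(2/(p-1)) * c)  for l:
   raise  l1 * theta^(2/(p-1)) * c / d^2 <= l^((p+1)/(p-1))  to the power
   (p-1)/(p+1). *)
Lemma lower_bound_from_weight (R : realType) (p theta c l1 l d : R) :
  1 < p -> 0 < theta -> 0 < c -> 0 < l1 -> 0 < l -> 0 < d ->
  l1 / powR l ((p + 1) / (p - 1)) <= d ^+ 2 / (powR theta (2 / (p - 1)) * c) ->
  powR l1 ((p - 1) / (p + 1)) * powR theta (2 / (p + 1))
    * powR c ((p - 1) / (p + 1)) * powR d (- (2 * (p - 1) / (p + 1))) <= l.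
Proof.
move=> p1 th0 c0 l10 l0 d0.
set q := (p + 1) / (p - 1); set r := 2 / (p - 1); set iq := (p - 1) / (p + 1).
have p1' : p - 1 != 0 by rewrite subr_eq0 gt_eqF.
have p1'' : p + 1 != 0 by rewrite gt_eqF //; lra.
have iq0 : 0 <= iq by rewrite /iq divr_ge0 //; lra.
have tr : 0 < powR theta r by exact: powR_gt0.
have lq : 0 < powR l q by exact: powR_gt0.
have d2 : 0 < d ^+ 2 by exact: exprn_gt0.
move=> hw.
have hk : l1 * (powR theta r * (c * (d ^+ 2)^-1)) <= powR l q.
  have k0 : 0 < powR l q * (powR theta r * (c * (d ^+ 2)^-1)).
    by rewrite !mulr_gt0 // invr_gt0.
  move: hw; rewrite -(ler_pM2r k0); congr (_ <= _); field.
    by rewrite !lt0r_neq0.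
  by rewrite !lt0r_neq0.
have := @ge0_ler_powR R iq iq0 _ _ _ _ hk.
have k0 : 0 <= l1 * (powR theta r * (c / d ^+ 2)).
  by rewrite !mulr_ge0 ?invr_ge0 ?ltW.
rewrite !nnegrE k0 powR_ge0 => /(_ isT isT).
rewrite -powRrM (_ : q * iq = 1); last by rewrite /q /iq; field; rewrite p1' p1''.
rewrite powRr1; last exact: ltW.
rewrite !powRM ?mulr_ge0 ?invr_ge0 ?powR_ge0 ?(ltW l10) ?(ltW c0) ?(ltW d2) //.
rewrite -powRrM (_ : r * iq = 2 / (p + 1)); last by rewrite /r /iq; field; rewrite p1' p1''.
rewrite -(powR_invn 2 (ltW d0)) -powRrM.
by rewrite (_ : - 2%:R * iq = - (2 * (p - 1) / (p + 1))) ?mulrA //; rewrite /iq; ring.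
Qed.

(* The relative-error condition of Algorithm 2, rescaled by the weight
   Ap / (2 lam) with which it enters the potential decrease. *)
Lemma error_condition_scaled (R : realType) (lam mu eps sigma Ap Nh Nt : R) :
  0 < lam -> 0 < mu -> 0 <= Ap ->
  Nh / (1 + lam * mu) + 2 * lam * eps <= sigma ^+ 2 * Nt ->
  Ap / (2 * lam * (1 + lam * mu)) * Nh + Ap * eps
    <= Ap / (2 * lam) * (sigma ^+ 2 * Nt).
Proof.
move=> l0 mu0 Ap0 herr.
have lmu : 0 < 1 + lam * mu by have := mulr_gt0 l0 mu0; lra.
have c0 : 0 <= Ap / (2 * lam) by rewrite divr_ge0 //; lra.
have := ler_wpM2l c0 herr; congr (_ <= _).
by field; rewrite !lt0r_neq0.
Qed.

Section Algorithm2.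
Variables (R : realType) (n : nat) (f g : 'rV[R]_n -> \bar R).
Variables (mu sigma p theta : R) (x y v xt : nat -> 'rV[R]_n).
Variables (eps lam a A : nat -> R).
Hypothesis mu_gt0 : 0 < mu.
Hypothesis alg : algorithm2 f g mu sigma p theta x y v xt eps lam a A.

Lemma A_zero : A 0%N = 0.
Proof. by case: alg. Qed.

Lemma lam_gt0 k : 0 < lam k.+1.
Proof. by have [_ /(_ k) []] := alg. Qed.

Lemma A_succ k : A k.+1 = A k + a k.+1.
Proof. by have [_ /(_ k) [_ [_ [_ [_ [_ [_ [_ []]]]]]]]] := alg. Qed.

(* a_(k+1) solves its quadratic as soon as A_k >= 0; this drives the
   induction showing A_k >= 0 for all k. *)
Lemma step_size_of_A_ge0 k : 0 <= A k ->
  0 < a k.+1 /\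
  a k.+1 ^+ 2 = lam k.+1 * ((1 + mu * A k) * (A k + a k.+1) + mu * A k * a k.+1).
Proof.
move=> hA; have [_ /(_ k) [hl [ha _]]] := alg.
exact: step_size_root (ltW mu_gt0) hA hl ha.
Qed.

Lemma A_ge0 k : 0 <= A k.
Proof.
elim: k => [|k ih]; first by rewrite A_zero.
by rewrite A_succ; have [ha _] := step_size_of_A_ge0 ih; lra.
Qed.

Lemma a_gt0 k : 0 < a k.+1.
Proof. by have [] := step_size_of_A_ge0 (A_ge0 k). Qed.

Lemma step_size_eq k :
  a k.+1 ^+ 2 = lam k.+1 * ((1 + mu * A k) * (A k + a k.+1) + mu * A k * a k.+1).
Proof. by have [] := step_size_of_A_ge0 (A_ge0 k). Qed.

(* In the first step A_0 = 0, so the quadratic reads a_1^2 = lam_1 a_1. *)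
Lemma A1_eq_lam1 : A 1%N = lam 1%N.
Proof.
have := step_size_eq 0; rewrite A_succ A_zero ?(mulr0, mul0r, add0r, addr0, mul1r) => e.
by apply: (mulIf (lt0r_neq0 (a_gt0 0))); rewrite -expr2 e.
Qed.

Lemma A_ge_A1 k : A 1%N <= A k.+1.
Proof.
elim: k => [|k ih]; first exact: lexx.
by rewrite (A_succ k.+1); have := a_gt0 k.+1; lra.
Qed.

End Algorithm2.

Section Potential.
Variables (R : realType) (n : nat) (f g : 'rV[R]_n -> \bar R).
Variables (mu sigma p theta : R) (xs : 'rV[R]_n) (x y v xt : nat -> 'rV[R]_n).
Variables (eps lam a A : nat -> R).
Hypotheses (pf : proper_fun f) (pg : proper_fun g).
Hypotheses (mu_gt0 : 0 < mu) (sc : strongly_convex_fun mu g).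
Hypothesis xs_min : is_minimizer (fun z => (f z + g z)%E) xs.
Hypothesis alg : algorithm2 f g mu sigma p theta x y v xt eps lam a A.

(* the real value of h = f + g, meaningful where f and g are finite *)
Definition hval (z : 'rV[R]_n) : R := fine (f z) + fine (g z).

Definition potential (k : nat) : R :=
  A k * (hval (y k) - hval xs) + (1 + mu * A k) / 2 * ip (x k - xs) (x k - xs).

Definition residual (j : nat) : R :=
  (1 - sigma ^+ 2) * A j / (2 * lam j) * ip (y j - xt j.-1) (y j - xt j.-1).

(* Every iterate y^(k+1) carries a subgradient, so f and g are finite there. *)
Lemma iterate_fin k : f (y k.+1) \is a fin_num /\ g (y k.+1) \is a fin_num.
Proof.
have [_ /(_ k) [_ [_ [_ [_ [[u1 [u2 [_ [hf hg]]]] _]]]]]] := alg.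
by split; [exact: eps_subdiff_fin hf | exact: eps_subdiff_fin hg].
Qed.

(* h(xs) <= h(y^1) < +oo, so f and g are finite at the minimizer *)
Lemma minimizer_fin : f xs \is a fin_num /\ g xs \is a fin_num.
Proof.
have := xs_min (y 1%N); have [h1 h2] := iterate_fin 0.
rewrite -(fineK h1) -(fineK h2) -EFinD !fin_numE (pf.1 xs) (pg.1 xs) /=.
by case: (f xs) (pf.1 xs) => [r| |] //; case: (g xs) (pg.1 xs) => [s| |].
Qed.

Lemma hval_min k : hval xs <= hval (y k.+1).
Proof.
have := xs_min (y k.+1); have [h1 h2] := iterate_fin k; have [h3 h4] := minimizer_fin.
by rewrite -(fineK h1) -(fineK h2) -(fineK h3) -(fineK h4) -!EFinD lee_fin.
Qed.

(* The potential is nonnegative: h(y^k) >= h(xs) for k >= 1 and A_0 = 0. *)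
Lemma potential_ge0 k : 0 <= potential k.
Proof.
rewrite /potential addr_ge0 //.
  case: k => [|k]; first by rewrite (A_zero alg) mul0r.
  by rewrite mulr_ge0 ?(A_ge0 mu_gt0 alg) // subr_ge0 hval_min.
rewrite mulr_ge0 ?ip_ge0 //.
by have := mulr_ge0 (ltW mu_gt0) (A_ge0 mu_gt0 alg k); lra.
Qed.

Lemma potential0 : potential 0 = vnorm (x 0%N - xs) ^+ 2 / 2.
Proof. by rewrite /potential (A_zero alg) mul0r add0r mulr0 addr0 vnorm_sq mul1r mulrC. Qed.

Lemma prev_iterate_ineq k :
  A k * (hval (y k.+1) + ip (v k.+1) (y k - y k.+1) - eps k.+1
         + mu / 2 * ip (y k - y k.+1) (y k - y k.+1)) <= A k * hval (y k).
Proof.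
have [_ /(_ k) [_ [_ [_ [_ [hs _]]]]]] := alg.
case: k hs => [|k] hs; first by rewrite (A_zero alg) !mul0r.
rewrite ler_wpM2l ?(A_ge0 mu_gt0 alg) //; have [fy gy] := iterate_fin k.
exact: (sum_subdiff_ineq pf pg mu_gt0 sc).
Qed.

Lemma potential_decrease k : potential k.+1 + residual k.+1 <= potential k.
Proof.
have [_ /(_ k) [hl [_ [hxt [_ [hs [herr [_ [hA hx]]]]]]]]] := alg.
have hA0 := A_ge0 mu_gt0 alg k; have ha0 := a_gt0 mu_gt0 alg k.
have Dxs := sum_subdiff_ineq pf pg mu_gt0 sc hs minimizer_fin.1 minimizer_fin.2.
have Derr := error_condition_scaled hl mu_gt0 (addr_ge0 hA0 (ltW ha0)) herr.
have Dy := prev_iterate_ineq k.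
have Id := estimate_sequence_identity (x k) (y k) (y k.+1) (v k.+1) xs
  mu_gt0 hA0 ha0 hl (step_size_eq mu_gt0 alg k).
rewrite !vnorm_sq hxt in Derr; cbv zeta in Id.
rewrite /potential /residual /= hx hA hxt.
set Nh := ip (_ *: _ + _ - _) _ in Derr Id *.
set Nt := ip (y k.+1 - _) _ in Derr Id *.
set Nx := ip (x k - y k) _ in Id.
have Nx0 : 0 <= Nx by exact: ip_ge0.
have c0 : 0 <= mu * A k * a k.+1 * (1 + mu * A k) * (1 + lam k.+1 * mu)
    / (2 * (A k + a k.+1) * (1 + mu * (A k + a k.+1))) * Nx.
  have muA0 : 0 <= mu * A k := mulr_ge0 (ltW mu_gt0) hA0.
  have muAp0 : 0 <= mu * (A k + a k.+1) by apply: mulr_ge0 (ltW mu_gt0) _; lra.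
  have lmu0 : 0 <= lam k.+1 * mu := mulr_ge0 (ltW hl) (ltW mu_gt0).
  by rewrite mulr_ge0 // divr_ge0 // !mulr_ge0 ?(ltW mu_gt0) //; lra.
have := ler_wpM2l (ltW ha0) Dxs.
rewrite /hval in Dy *; lra.
Qed.

(* Telescoping the decrease and using potential >= 0. *)
Lemma sum_residual_le k :
  \sum_(1 <= j < k.+1) residual j <= vnorm (x 0%N - xs) ^+ 2 / 2.
Proof.
rewrite -potential0.
suff tele : potential k + \sum_(1 <= j < k.+1) residual j <= potential 0.
  by have := potential_ge0 k; lra.
elim: k => [|k ih]; first by rewrite big_geq // addr0.
by rewrite big_nat_recr //=; have := potential_decrease k; lra.
Qed.

(* First claim of the theorem: by the large-step condition each weight
   A_j / lam_j^((p+1)/(p-1)) is at most K * residual j, and the residuals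
   sum to at most d0^2 / 2. *)
Lemma weighted_sum_bound k :
  0 <= sigma < 1 -> 1 < p -> 0 < theta ->
  \sum_(1 <= j < k.+1) A j / powR (lam j) ((p + 1) / (p - 1))
    <= vnorm (x 0%N - xs) ^+ 2 / (powR theta (2 / (p - 1)) * (1 - sigma ^+ 2)).
Proof.
move=> /andP[s0 s1] p1 th0.
have s2 : 0 < 1 - sigma ^+ 2 by rewrite subr_gt0 expr2; nra.
have tr : 0 < powR theta (2 / (p - 1)) by exact: powR_gt0.
set K := 2 / ((1 - sigma ^+ 2) * powR theta (2 / (p - 1))).
have K0 : 0 <= K by rewrite divr_ge0 // mulr_ge0 // ltW.
have weight_le j : A j.+1 / powR (lam j.+1) ((p + 1) / (p - 1))
    <= K * residual j.+1.
  have [_ /(_ j) [hl [_ [_ [_ [_ [_ [hth _]]]]]]]] := alg.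
  apply: le_trans (large_step_weight p1 th0 hl (vnorm_ge0 _)
    (A_ge0 mu_gt0 alg _) hth) _.
  by rewrite /residual /K vnorm_sq le_eqVlt; apply/predU1P; left; field;
    rewrite !lt0r_neq0.
apply: le_trans (ler_sum_nat (G := fun j => K * residual j) _) _.
  by move=> [|j] //= _; exact: weight_le.
rewrite -mulr_sumr (le_trans (ler_wpM2l K0 (sum_residual_le k))) //.
by rewrite /K le_eqVlt; apply/predU1P; left; field; rewrite !lt0r_neq0.
Qed.

End Potential.
Unset Implicit Arguments.

Theorem lemma3p1 (R : realType) (n : nat) (f g : 'rV[R]_n -> \bar R)
    (mu sigma p theta : R) (xs : 'rV[R]_n)
    (x y v xt : nat -> 'rV[R]_n) (eps lam a A : nat -> R) :
  proper_fun f -> closed_fun f -> convex_fun f ->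
  proper_fun g -> closed_fun g -> convex_fun g ->
  0 < mu -> strongly_convex_fun mu g ->
  (exists z, (f z + g z < +oo)%E) ->
  is_minimizer (fun z => (f z + g z)%E) xs ->
  0 <= sigma < 1 -> 2 <= p -> 0 < theta ->
  algorithm2 f g mu sigma p theta x y v xt eps lam a A ->
  let d0 := vnorm (x 0%N - xs) in
  (forall k : nat, (1 <= k)%N ->
     \sum_(1 <= j < k.+1) A j / powR (lam j) ((p + 1) / (p - 1))
       <= d0 ^+ 2 / (powR theta (2 / (p - 1)) * (1 - sigma ^+ 2))) /\
  (0 < d0 ->
     let C := powR (lam 1%N) ((p - 1) / (p + 1)) * powR theta (2 / (p + 1))
              * powR (1 - sigma ^+ 2) ((p - 1) / (p + 1)) in
     forall k : nat, (1 <= k)%N ->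
       C * powR d0 (- (2 * (p - 1) / (p + 1))) <= lam k).
Proof.
move=> pf _ _ pg _ _ mu0 sc _ xs_min hsigma p2 th0 alg d0.
have p1 : 1 < p by lra.
have part1 k := weighted_sum_bound pf pg mu0 sc xs_min alg k hsigma p1 th0.
split=> [k _|d0_gt0 C [//|k] _]; first exact: part1.
have s2 : 0 < 1 - sigma ^+ 2.
  by case/andP: hsigma => s0 s1; rewrite subr_gt0 expr2; nra.
apply: lower_bound_from_weight => //; [exact: lam_gt0 alg 0 | exact: lam_gt0 alg k|].
(* keep only the last term of the sum, and use A_(k+1) >= A_1 = lam_1 *)
apply: le_trans (part1 k.+1); rewrite big_nat_recr //= -(A1_eq_lam1 mu0 alg).
rewrite -[X in X <= _]add0r lerD ?sumr_ge0 // => [j _|].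
  by rewrite divr_ge0 ?powR_ge0 ?(A_ge0 mu0 alg).
by rewrite ler_wpM2r ?invr_ge0 ?powR_ge0 ?(A_ge_A1 mu0 alg).
Qed.
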